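(* Let $\mu$ be a probability measure on $\{0,1\}^{\mathbb{N}}$ with negatively correlated coordinates, i.e. $X\sim\mu$ satisfies $\mathbb{E}[X_iX_j]\le \mathbb{E}[X_i]\mathbb{E}[X_j]$ for all $i\neq j$ in $\mathbb{N}$, and let $\tilde\mu$ be its product version. Then $$\Delta_n(\mu)\ \ge\ \tfrac14\,\Delta_n(\tilde\mu)\qquad\text{for all } n\ge 1.$$
   Context: For a probability measure $\mu$ on $\{0,1\}^{\mathbb{N}}$ and $n\ge1$, let $X^{(1)},\dots,X^{(n)}$ be i.i.d. samples from $\mu$ and define $\Delta_n(\mu):=\mathbb{E}\sup_{j\in\mathbb{N}}\left|\frac1n\sum_{i=1}^n X^{(i)}_j-\mathbb{E}_{X\sim\mu}[X_j]\right|$. The product version $\tilde\mu$ of $\mu$ is the product measure on $\{0,1\}^{\mathbb{N}}$ whose one-dimensional marginals agree with those of $\mu$ (i.e. the coordinates are independent with the same marginal laws as under $\mu$). *)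

From HB Require Import structures.
From mathcomp Require Import all_boot all_order all_algebra.
From mathcomp Require Import all_classical all_reals all_analysis.
Set Implicit Arguments. Unset Strict Implicit. Unset Printing Implicit Defensive.
Import Order.TTheory GRing.Theory Num.Theory.
Local Open Scope classical_set_scope.
Local Open Scope ring_scope.

(* Cylinder sets of {0,1}^N : preimages of (arbitrary) subsets of bool under a
   coordinate projection; they generate the product sigma-algebra. *)
Definition cyl : set (set (nat -> bool)) :=
  [set A | exists (j : nat) (B : set bool), A = (fun x : nat -> bool => x j) @^-1` B].

Definition cube := g_sigma_algebraType cyl.

Definition coord_mean (R : realType) (mu : probability cube R) (j : nat) : \bar R :=
  (\int[mu]_(x in setT) ((x j)%:R : R)%:E)%E.

Definition neg_correlated (R : realType) (mu : probability cube R) : Prop :=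
  forall i j : nat, i <> j ->
    (\int[mu]_(x in setT) (((x i)%:R * (x j)%:R : R))%:E
       <= coord_mean mu i * coord_mean mu j)%E.

Definition indep_coords (R : realType) (nu : probability cube R) : Prop :=
  forall (F : seq nat) (B : nat -> set bool), uniq F ->
    nu [set x : cube | forall j, j \in F -> B j (x j)] =
    (\prod_(j <- F) nu [set x : cube | B j (x j)])%E.

Definition product_version (R : realType) (mu nu : probability cube R) : Prop :=
  indep_coords nu /\
  forall (j : nat) (B : set bool),
    nu [set x : cube | B (x j)] = mu [set x : cube | B (x j)].

Definition iid_sample (R : realType) (d : measure_display) (Omega : measurableType d)
  (P : probability Omega R) (mu : probability cube R) (n : nat)
  (X : 'I_n -> Omega -> cube) : Prop :=
  (forall i, measurable_fun setT (X i)) /\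
  (forall i (A : set cube), measurable A -> P (X i @^-1` A) = mu A) /\
  (forall B : 'I_n -> set cube, (forall i, measurable (B i)) ->
     P (\bigcap_(i in [set: 'I_n]) (X i @^-1` B i)) =
     (\prod_(i < n) P (X i @^-1` B i))%E).

Definition max_dev (R : realType) (mu : probability cube R) (n : nat)
  (x : 'I_n -> cube) : \bar R :=
  ereal_sup (range (fun j : nat =>
    `| ((n%:R^-1 * \sum_(i < n) ((x i j)%:R : R))%:E - coord_mean mu j)%E |%E)).

Definition Delta (R : realType) (d : measure_display) (Omega : measurableType d)
  (P : probability Omega R) (mu : probability cube R) (n : nat)
  (X : 'I_n -> Omega -> cube) : \bar R :=
  (\int[P]_(w in setT) max_dev mu (fun i => X i w))%E.

From HB Require Import structures.
From mathcomp Require Import all_boot all_order all_algebra.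
From mathcomp Require Import all_classical all_reals all_analysis.
From mathcomp Require Import measurable_realfun ring lra.
Import Order.TTheory GRing.Theory Num.Theory.
Local Open Scope classical_set_scope.
Local Open Scope ring_scope.

Set Implicit Arguments. Unset Strict Implicit. Unset Printing Implicit Defensive.

(* Write Delta_n as the integral over r >= 0 of the tail P(sup_j dev_j > r) and compare
   the tails.  Let A_j (resp. B_j) be the event that the empirical mean of coordinate j
   exceeds its expectation by more than r (resp. falls below it by more than r), and
   a = sum_j P(A_j), b = sum_j P(B_j); these only depend on the one-dimensional marginals.
   For the product version the union bound gives a tail at most min(1, a + b).  Under mu,
   the counts of ones in two coordinates are sums of n i.i.d. negatively correlated pairs
   of bits, and induction on n shows that monotone functions of the two counts are
   negatively correlated; so the A_j (and the B_j) are pairwise negatively correlated and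
   the Chung-Erdos second-moment inequality bounds the tail below by a / (1 + a) and by
   b / (1 + b).  Finally min(1, a + b) <= 4 max(a / (1 + a), b / (1 + b)).  Only the
   marginals of the product version matter, not the independence of its coordinates. *)

(** * Finite weighted sums *)

Section finite_weights.
Variable R : realFieldType.

Definition ffun_cons (T : Type) n (t : T) (b : {ffun 'I_n -> T}) : {ffun 'I_n.+1 -> T} :=
  [ffun k => if unlift ord0 k is Some k' then b k' else t].

Lemma ffun_cons0 (T : Type) n (t : T) (b : {ffun 'I_n -> T}) : ffun_cons t b ord0 = t.
Proof. by rewrite ffunE unlift_none. Qed.

Lemma ffun_cons_lift (T : Type) n (t : T) (b : {ffun 'I_n -> T}) k :
  ffun_cons t b (lift ord0 k) = b k.
Proof. by rewrite ffunE liftK. Qed.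

Lemma sum_ffun_cons (T : finType) n (G : {ffun 'I_n.+1 -> T} -> R) :
  \sum_b G b = \sum_t \sum_(b : {ffun 'I_n -> T}) G (ffun_cons t b).
Proof.
rewrite pair_bigA /= (reindex (fun p : T * {ffun 'I_n -> T} => ffun_cons p.1 p.2)) //=.
exists (fun b : {ffun 'I_n.+1 -> T} => (b ord0, [ffun k => b (lift ord0 k)])).
  move=> [t b] _ /=; rewrite ffun_cons0; congr pair; apply/ffunP => k.
  by rewrite ffunE ffun_cons_lift.
move=> b _; apply/ffunP => k; rewrite ffunE.
by case: (unliftP ord0 k) => [k'|] ->; rewrite ?ffunE.
Qed.

Definition ffun_weight (T : Type) (q : T -> R) n (b : {ffun 'I_n -> T}) : R :=
  \prod_(k < n) q (b k).

Lemma ffun_weight_ge0 (T : Type) (q : T -> R) n (b : {ffun 'I_n -> T}) :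
  (forall t, 0 <= q t) -> 0 <= ffun_weight q b.
Proof. by move=> q_ge0; apply: prodr_ge0. Qed.

Lemma sum_bool_pair (H : bool * bool -> R) :
  \sum_t H t = H (true, true) + H (true, false) + (H (false, true) + H (false, false)).
Proof.
rewrite (eq_bigr (fun t => H (t.1, t.2))); last by case.
by rewrite -(pair_big xpredT xpredT (fun a b => H (a, b))) /= !big_bool.
Qed.

(* E[F(S, S')] where S, S' count the ones in the two coordinates of n i.i.d. pairs of
   bits with law q. *)
Definition expect_counts (q : bool * bool -> R) n (F : nat -> nat -> R) : R :=
  \sum_(b : {ffun 'I_n -> bool * bool})
    ffun_weight q b * F (\sum_(k < n) (b k).1)%N (\sum_(k < n) (b k).2)%N.

Lemma expect_counts0 q F : expect_counts q 0 F = F 0%N 0%N.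
Proof.
rewrite /expect_counts (eq_bigr (fun _ => F 0%N 0%N)) => [|b _].
  by rewrite sumr_const card_ffun card_ord expn0 mulr1n.
by rewrite /ffun_weight !big_ord0 mul1r.
Qed.

Lemma expect_countsS q n F :
  expect_counts q n.+1 F =
  \sum_t q t * expect_counts q n (fun a c => F (t.1 + a)%N (t.2 + c)%N).
Proof.
rewrite /expect_counts sum_ffun_cons; apply: eq_bigr => t _.
rewrite mulr_sumr; apply: eq_bigr => b _.
rewrite /ffun_weight !big_ord_recl !ffun_cons0 -mulrA.
by congr (_ * (_ * F (_ + _) (_ + _))); apply: eq_bigr => k _; rewrite ffun_cons_lift.
Qed.

Section negcorr_pair.
Variables (q : bool * bool -> R).
Hypothesis q_ge0 : forall t, 0 <= q t.
Hypothesis q_sum1 : \sum_t q t = 1.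
Hypothesis q_negcorr :
  q (true, true) <= (q (true, true) + q (true, false)) * (q (true, true) + q (false, true)).

(* Using the total mass 1, the difference of the two sides is
   (F1 - F0) (G1 - G0) (P(first = 1) P(second = 1) - q(1, 1)). *)
Lemma cov_bool_pair_le (F G : bool -> R) : F false <= F true -> G false <= G true ->
  \sum_t q t * (F t.1 * G t.2) <= (\sum_t q t * F t.1) * (\sum_t q t * G t.2).
Proof.
move=> leF leG; move: q_sum1 q_negcorr; rewrite !sum_bool_pair /= => q1 qnc.
have q00 : q (false, false) = 1 - q (true, true) - q (true, false) - q (false, true) by lra.
rewrite -subr_ge0 q00; move: qnc.
set a := q (true, true); set b := q (true, false); set c := q (false, true) => qnc.
rewrite [X in 0 <= X](_ : _ = (F true - F false) * (G true - G false) * ((a + b) * (a + c) - a)).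
  by rewrite !mulr_ge0 // subr_ge0.
ring.
Qed.

Lemma ler_expect_counts n (F G : nat -> nat -> R) : (forall a c, F a c <= G a c) ->
  expect_counts q n F <= expect_counts q n G.
Proof.
move=> leFG; apply: ler_sum => b _.
by apply: ler_wpM2l; [exact: ffun_weight_ge0 | exact: leFG].
Qed.

Lemma expect_counts_mono_le n (phi psi : nat -> R) :
  {homo phi : a b / (a <= b)%N >-> a <= b} -> {homo psi : a b / (a <= b)%N >-> a <= b} ->
  expect_counts q n (fun a c => phi a * psi c) <=
  expect_counts q n (fun a _ => phi a) * expect_counts q n (fun _ c => psi c).
Proof.
(* condition on the first pair: the induction hypothesis applies to the shifted functions,
   and [cov_bool_pair_le] to their averages Phi, Psi, which are again monotone *)
elim: n phi psi => [|n IHn] phi psi phi_mono psi_mono; first by rewrite !expect_counts0.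
rewrite !expect_countsS.
pose Phi u := expect_counts q n (fun a _ => phi (u + a)%N).
pose Psi u := expect_counts q n (fun _ c => psi (u + c)%N).
apply: (@le_trans _ _ (\sum_t q t * (Phi t.1 * Psi t.2))).
  apply: ler_sum => t _; apply: ler_wpM2l => //.
  by apply: IHn => a b ab; [apply: phi_mono | apply: psi_mono]; rewrite leq_add2l.
by apply: (cov_bool_pair_le (F := Phi) (G := Psi)); apply: ler_expect_counts => a c;
  [apply: phi_mono | apply: psi_mono]; rewrite leq_add2r.
Qed.

Lemma expect_counts_anti_le n (phi psi : nat -> R) :
  {homo phi : a b / (a <= b)%N >-> b <= a} -> {homo psi : a b / (a <= b)%N >-> b <= a} ->
  expect_counts q n (fun a c => phi a * psi c) <=
  expect_counts q n (fun a _ => phi a) * expect_counts q n (fun _ c => psi c).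
Proof.
move=> phi_anti psi_anti.
have expect_countsN F : expect_counts q n (fun a c => - F a c) = - expect_counts q n F.
  by rewrite /expect_counts -sumrN; apply: eq_bigr => b _; rewrite mulrN.
have := @expect_counts_mono_le n (fun a => - phi a) (fun c => - psi c).
rewrite !expect_countsN mulrNN.
have -> : (fun a c => - phi a * - psi c) = (fun a c => phi a * psi c).
  by apply/funext => a; apply/funext => c; rewrite mulrNN.
by apply=> a b ab; rewrite lerN2; [apply: phi_anti | apply: psi_anti].
Qed.

End negcorr_pair.

Lemma sumr_pred_natr (B : finType) (P : pred B) (w : B -> R) :
  \sum_(b | P b) w b = \sum_b w b * (P b)%:R.
Proof. by rewrite big_mkcond; apply: eq_bigr => b _; case: (P b); rewrite ?mulr1 ?mulr0. Qed.

Section chung_erdos_fin.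
Variables (B : finType) (w : B -> R) (J : nat) (A : 'I_J -> pred B).
Hypothesis w_ge0 : forall b, 0 <= w b.
Hypothesis A_negcorr : forall i j, i != j ->
  \sum_(b | A i b && A j b) w b <= (\sum_(b | A i b) w b) * (\sum_(b | A j b) w b).

Let p j := \sum_(b | A j b) w b.
Let s := \sum_j p j.
Let Z b := \sum_j ((A j b)%:R : R).

Let p_ge0 j : 0 <= p j. Proof. exact: sumr_ge0. Qed.

Let sum_Z : \sum_b w b * Z b = s.
Proof.
rewrite /s /p; under [RHS]eq_bigr do rewrite sumr_pred_natr.
by rewrite exchange_big /=; apply: eq_bigr => b _; rewrite mulr_sumr.
Qed.

Let sum_Z2_le : \sum_b w b * Z b ^+ 2 <= s + s * s.
Proof.
have -> : \sum_b w b * Z b ^+ 2 = \sum_i \sum_j \sum_(b | A i b && A j b) w b.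
  under [RHS]eq_bigr do under eq_bigr do rewrite sumr_pred_natr.
  under [RHS]eq_bigr do rewrite exchange_big.
  rewrite [RHS]exchange_big /=; apply: eq_bigr => b _.
  rewrite /Z expr2 mulr_suml mulr_sumr; apply: eq_bigr => i _.
  rewrite !mulr_sumr; apply: eq_bigr => j _.
  by rewrite -mulnb natrM mulrA.
rewrite /s mulr_suml -big_split /=; apply: ler_sum => i _.
rewrite [X in X <= _](bigD1 i) //=; under eq_bigl do rewrite andbb; rewrite lerD2l.
apply: (@le_trans _ _ (\sum_(j | j != i) p i * p j)).
  by apply: ler_sum => j ji; apply: A_negcorr; rewrite eq_sym.
rewrite -mulr_sumr ler_wpM2l // [X in _ <= X](bigD1 i) //= lerDr.
exact: p_ge0.
Qed.

(* Average the pointwise bound [1_{Z > 0} >= 2 l Z - l^2 Z^2], where l = 1 / (1 + s). *)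
Lemma chung_erdos_fin : s / (1 + s) <= \sum_(b | [exists j, A j b]) w b.
Proof.
have s_ge0 : 0 <= s by exact: sumr_ge0.
pose l := (1 + s)^-1.
have l_ge0 : 0 <= l by rewrite invr_ge0; lra.
have Z_le b : 2 * l * Z b - l ^+ 2 * Z b ^+ 2 <= ([exists j, A j b])%:R.
  case: (boolP [exists j, A j b]) => [_ | /existsPn noA].
    by have := sqr_ge0 (1 - l * Z b); rewrite -[1%:R]/(1 : R); nra.
  rewrite /Z big1 => [|j _]; last by rewrite (negbTE (noA j)).
  by rewrite expr0n /= !mulr0 subr0.
rewrite sumr_pred_natr.
apply: le_trans (ler_sum _ (fun b _ => ler_wpM2l (w_ge0 b) (Z_le b))).
under eq_bigr do rewrite mulrBr mulrCA [w _ * (_ * _)]mulrCA.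
rewrite sumrB -!mulr_sumr sum_Z.
apply: le_trans (lerB (lexx _) (ler_wpM2l (exprn_ge0 2 l_ge0) sum_Z2_le)).
rewrite [leLHS](_ : _ = 2 * l * s - l ^+ 2 * (s + s * s)) // /l.
by field; lra.
Qed.

End chung_erdos_fin.

Lemma le4_of_ratio_bounds (x y a b : R) : 0 <= a -> 0 <= b -> x <= 1 -> x <= a + b ->
  a / (1 + a) <= y -> b / (1 + b) <= y -> x <= 4 * y.
Proof.
move=> a_ge0 b_ge0 x_le1 x_le hay hby.
have ha : a <= y * (1 + a) by rewrite -ler_pdivrMr; lra.
have hb : b <= y * (1 + b) by rewrite -ler_pdivrMr; lra.
wlog le_ba : a b a_ge0 b_ge0 x_le hay hby ha hb / b <= a.
  move=> H; case: (lerP b a) => [|/ltW]; first exact: H.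
  by apply: H; rewrite // addrC.
case: (lerP a 1) => a1; nra.
Qed.

End finite_weights.

(** * Events of i.i.d. samples *)

Section finite_valued_map.
Context d (T : measurableType d) (V : finType) (g : T -> V).
Hypothesis mg : forall v, measurable (g @^-1` [set v]).

Let preimage_predE (S : pred V) :
  [set x | S (g x)] = \bigcup_(v in [set` S]) g @^-1` [set v].
Proof. by apply/seteqP; split => [x Sx | x [v Sv gxv]]; [exists (g x) | rewrite /= gxv]. Qed.

Lemma measurable_preimage_pred (S : pred V) : measurable [set x | S (g x)].
Proof.
rewrite preimage_predE; apply: fin_bigcup_measurable => [|v _]; last exact: mg.
exact: finite_finset.
Qed.

Lemma measure_preimage_pred (R : realType) (m : {measure set T -> \bar R}) (S : pred V) :
  m [set x | S (g x)] = (\sum_(v | S v) m (g @^-1` [set v]))%E.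
Proof.
rewrite preimage_predE measure_fin_bigcup.
- by symmetry; apply: bigfs => [|v _]; rewrite ?index_enum_uniq ?mem_index_enum.
- exact: finite_finset.
- by move=> u v _ _ [x [/= <- <-]].
- by move=> v _; exact: mg.
Qed.

End finite_valued_map.

Lemma probability_fineK d (T : measurableType d) (R : realType) (P : probability T R) A :
  measurable A -> (fine (P A))%:E = P A.
Proof. by move=> mA; rewrite fineK // fin_num_measure. Qed.

Section law_weight.
Context d (T : measurableType d) (R : realType) (mu : probability T R).

Definition law_weight (V : Type) (f : T -> V) (v : V) : R := fine (mu (f @^-1` [set v])).

Lemma law_weightE (V : Type) (f : T -> V) v :
  (forall v, measurable (f @^-1` [set v])) -> (law_weight f v)%:E = mu (f @^-1` [set v]).
Proof. by move=> mf; exact: probability_fineK. Qed.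

Lemma law_weight_ge0 (V : Type) (f : T -> V) v : 0 <= law_weight f v.
Proof. exact/fine_ge0/measure_ge0. Qed.

Lemma sum_law_weight (V : finType) (f : T -> V) :
  (forall v, measurable (f @^-1` [set v])) -> \sum_v law_weight f v = 1.
Proof.
move=> mf; apply: EFin_inj; rewrite -sumEFin.
rewrite (eq_bigr (fun v => mu (f @^-1` [set v]))) => [|v _]; last exact: law_weightE.
rewrite -(probability_setT mu) -(measure_preimage_pred mf mu xpredT).
by congr (mu _); apply/seteqP.
Qed.

End law_weight.

Section iid_events.
Context (R : realType) d (Omega : measurableType d) (P : probability Omega R)
  (mu : probability cube R) (n : nat) (X : 'I_n -> Omega -> cube).
Hypothesis hX : iid_sample P mu X.

Let measurable_sample_preimage k (A : set cube) : measurable A -> measurable (X k @^-1` A).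
Proof. by move=> mA; rewrite -[X k @^-1` A]setTI; exact: hX.1 k measurableT A mA. Qed.

Variables (V : finType) (f : cube -> V).
Hypothesis mf : forall v, measurable (f @^-1` [set v]).

Let sample_preimageE b : (fun w => [ffun k => f (X k w)]) @^-1` [set b] =
  \bigcap_(k in [set: 'I_n]) X k @^-1` (f @^-1` [set b k]).
Proof.
apply/seteqP; split => [w <- k _ /=|w bw]; first by rewrite ffunE.
by apply/ffunP => k; rewrite ffunE; exact: bw.
Qed.

Let measurable_sample_fun b : measurable ((fun w => [ffun k => f (X k w)]) @^-1` [set b]).
Proof.
rewrite sample_preimageE; apply: fin_bigcap_measurable => [|k _]; first exact: finite_finset.
by apply: measurable_sample_preimage; exact: mf.
Qed.

Lemma iid_event_measurable (E : set Omega) (S : pred {ffun 'I_n -> V}) :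
  (forall w, E w <-> S [ffun k => f (X k w)]) -> measurable E.
Proof.
move=> ES; rewrite (_ : E = [set w | S [ffun k => f (X k w)]]).
  exact: measurable_preimage_pred.
by apply/seteqP; split => w /ES.
Qed.

Lemma iid_event_prob (E : set Omega) (S : pred {ffun 'I_n -> V}) :
  (forall w, E w <-> S [ffun k => f (X k w)]) ->
  P E = (\sum_(b | S b) ffun_weight (law_weight mu f) b)%:E.
Proof.
move=> ES; rewrite (_ : E = [set w | S [ffun k => f (X k w)]]); last first.
  by apply/seteqP; split => w /ES.
rewrite measure_preimage_pred // -sumEFin; apply: eq_bigr => b _.
rewrite sample_preimageE; apply: (eq_trans (hX.2.2 _ (fun k => mf _))).
by rewrite -prodEFin; apply: eq_bigr => k _; rewrite law_weightE // hX.2.1.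
Qed.

End iid_events.

Lemma measurable_coord (j : nat) (B : set bool) : measurable [set x : cube | B (x j)].
Proof. by apply: sub_sigma_algebra; exists j, B. Qed.

Lemma measurable_coord_true (j : nat) : measurable [set x : cube | x j].
Proof. exact: (measurable_coord j (fun b => b)). Qed.

Lemma measurable_coord_pair (i j : nat) (v : bool * bool) :
  measurable ((fun x : cube => (x i, x j)) @^-1` [set v]).
Proof.
rewrite (_ : _ @^-1` _ = [set x : cube | [set v.1] (x i)] `&` [set x | [set v.2] (x j)]).
  by apply: measurableI; apply: measurable_coord.
by case: v => a b; apply/seteqP; split => x /=; [case=> -> -> | case=> -> ->].
Qed.

Lemma integral_natr_pred (R : realType) (nu : probability cube R) (b : cube -> bool) :
  measurable [set x | b x] -> (\int[nu]_(x in setT) ((b x)%:R : R)%:E = nu [set x | b x])%E.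
Proof.
move=> mb; rewrite -(setIT [set x | b x]) -integral_indic //.
apply: eq_integral => x _; rewrite indicE.
by case: (boolP (b x)) => bx; [rewrite mem_set | rewrite memNset //; exact/negP].
Qed.

Lemma coord_meanE (R : realType) (nu : probability cube R) j :
  coord_mean nu j = nu [set x | x j].
Proof. by apply: integral_natr_pred; exact: measurable_coord_true. Qed.

Definition mean (R : realType) (nu : probability cube R) j : R := fine (coord_mean nu j).

Lemma meanE (R : realType) (nu : probability cube R) j : (mean nu j)%:E = coord_mean nu j.
Proof. by rewrite /mean coord_meanE probability_fineK //; exact: measurable_coord_true. Qed.

Lemma mean_ge0 (R : realType) (nu : probability cube R) j : 0 <= mean nu j.
Proof. by rewrite -lee_fin meanE coord_meanE measure_ge0. Qed.

Lemma mean_le1 (R : realType) (nu : probability cube R) j : mean nu j <= 1.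
Proof.
by rewrite -lee_fin meanE coord_meanE probability_le1 //; exact: measurable_coord_true.
Qed.

Definition upward_closed (U : pred nat) := forall a b, (a <= b)%N -> U a -> U b.
Definition downward_closed (U : pred nat) := forall a b, (a <= b)%N -> U b -> U a.

Lemma upward_closed_natr (R : numDomainType) (U : pred nat) : upward_closed U ->
  {homo (fun a => (U a)%:R : R) : a b / (a <= b)%N >-> a <= b}.
Proof. by move=> hU a b ab; case: (boolP (U a)) => [/(hU _ _ ab) -> | _]. Qed.

Lemma downward_closed_natr (R : numDomainType) (U : pred nat) : downward_closed U ->
  {homo (fun a => (U a)%:R : R) : a b / (a <= b)%N >-> b <= a}.
Proof. by move=> hU a b ab; case: (boolP (U b)) => [/(hU _ _ ab) -> | _]. Qed.

Section count_events.
Context (R : realType) d (Omega : measurableType d) (P : probability Omega R)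
  (mu : probability cube R) (n : nat) (X : 'I_n -> Omega -> cube).
Hypothesis hX : iid_sample P mu X.

Definition sample_count (j : nat) (w : Omega) : nat := (\sum_(k < n) X k w j)%N.

Definition count_event (j : nat) (U : pred nat) : set Omega :=
  [set w | U (sample_count j w)].

Lemma sample_countE (V : Type) (f : cube -> V) (h : V -> bool) j w :
  (forall x, h (f x) = x j) -> sample_count j w = (\sum_(k < n) h ([ffun k => f (X k w)] k))%N.
Proof. by move=> hf; apply: eq_bigr => k _; rewrite ffunE hf. Qed.

Lemma count_event_coordE j U w :
  count_event j U w <-> U (\sum_(k < n) [ffun k => X k w j] k)%N.
Proof. by rewrite /count_event /= (@sample_countE _ (fun x => x j) (fun b => b)). Qed.

Lemma measurable_count_event j U : measurable (count_event j U).
Proof.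
exact: (iid_event_measurable hX (fun v => measurable_coord j [set v])
  (S := fun b => U (\sum_(k < n) b k)%N) (count_event_coordE j U)).
Qed.

Hypothesis hnc : neg_correlated mu.
Variables (i j : nat).
Hypothesis ij : i <> j.

Let q := law_weight mu (fun x : cube => (x i, x j)).

Let q_negcorr :
  q (true, true) <= (q (true, true) + q (true, false)) * (q (true, true) + q (false, true)).
Proof.
have qE (S : pred (bool * bool)) :
    (\sum_(v | S v) q v)%:E = mu [set x | S (x i, x j)].
  rewrite (measure_preimage_pred (measurable_coord_pair i j)) -sumEFin.
  by apply: eq_bigr => v _; rewrite law_weightE //; exact: measurable_coord_pair.
have q11 : (q (true, true))%:E = mu [set x | x i && x j].
  by have := qE [pred v | v.1 && v.2]; rewrite big_mkcond sum_bool_pair /= !addr0.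
have qi : (q (true, true) + q (true, false))%:E = mu [set x | x i].
  by have := qE fst; rewrite big_mkcond sum_bool_pair /= !addr0.
have qj : (q (true, true) + q (false, true))%:E = mu [set x | x j].
  by have := qE snd; rewrite big_mkcond sum_bool_pair /= !addr0.
have := hnc ij; rewrite !coord_meanE -qi -qj -EFinM.
rewrite (eq_integral (fun x : cube => ((x i && x j)%:R : R)%:E)) => [|x _]; last first.
  by rewrite -natrM mulnb.
rewrite integral_natr_pred -?q11 ?lee_fin //.
exact: (measurable_preimage_pred (measurable_coord_pair i j) [pred v | v.1 && v.2]).
Qed.

Let pair_count_prob (S : nat -> nat -> bool) :
  P [set w | S (sample_count i w) (sample_count j w)] =
  (expect_counts q n (fun a c => (S a c)%:R))%:E.
Proof.
rewrite (iid_event_prob hX (measurable_coord_pair i j)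
  (S := fun b => S (\sum_(k < n) (b k).1)%N (\sum_(k < n) (b k).2)%N)) => [|w].
  by rewrite sumr_pred_natr.
rewrite /= (@sample_countE _ (fun x => (x i, x j)) fst i) //.
by rewrite (@sample_countE _ (fun x => (x i, x j)) snd j).
Qed.

Lemma count_events_negcorr (U V : pred nat) :
  (upward_closed U /\ upward_closed V) \/ (downward_closed U /\ downward_closed V) ->
  (P (count_event i U `&` count_event j V) <= P (count_event i U) * P (count_event j V))%E.
Proof.
move=> UV_mono.
rewrite (_ : _ `&` _ = [set w | U (sample_count i w) && V (sample_count j w)]); last first.
  by apply/seteqP; split => w /=; [case=> -> -> | case/andP].
rewrite (pair_count_prob (fun a c => U a && V c)) (pair_count_prob (fun a _ => U a)).
rewrite (pair_count_prob (fun _ c => V c)) -EFinM lee_fin.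
under eq_fun do under eq_fun do rewrite -mulnb natrM.
have q_ge0 := law_weight_ge0 mu (fun x : cube => (x i, x j)).
have q_sum1 := sum_law_weight mu (measurable_coord_pair i j).
case: UV_mono => [[hU hV] | [hU hV]].
- by apply: (expect_counts_mono_le q_ge0 q_sum1 q_negcorr); apply: upward_closed_natr.
- by apply: (expect_counts_anti_le q_ge0 q_sum1 q_negcorr); apply: downward_closed_natr.
Qed.

End count_events.

(** * The Chung-Erdos inequality and tails of the maximal deviation *)

Section chung_erdos.
Context d (T : measurableType d) (R : realType) (P : probability T R).
Variables (E : nat -> set T) (J : nat).
Hypothesis mE : forall j, measurable (E j).
Hypothesis E_negcorr : forall i j, i != j -> (P (E i `&` E j) <= P (E i) * P (E j))%E.

(* The vector of indicators moves the events to a finite probability space. *)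
Let g (x : T) : {ffun 'I_J -> bool} := [ffun j : 'I_J => x \in E j].

Let E_gE (j : 'I_J) : E j = [set x | g x j].
Proof. by apply/seteqP; split => x; rewrite /= ffunE inE. Qed.

Let mg b : measurable (g @^-1` [set b]).
Proof.
rewrite (_ : _ @^-1` _ = \bigcap_(j in [set: 'I_J]) if b j then E j else ~` E j).
  apply: fin_bigcap_measurable => [|j _]; first exact: finite_finset.
  by case: (b j); [exact: mE | exact/measurableC/mE].
apply/seteqP; split => [x <- j _|x gx].
  rewrite /g ffunE; case: (boolP (x \in E j)) => [/set_mem // | xnE].
  by move=> /mem_set; rewrite (negbTE xnE).
apply/ffunP => j; rewrite ffunE; have := gx j I.
by case: (b j) => [/mem_set | ]; last exact: memNset.
Qed.

Let fine_prob_pred (S : pred {ffun 'I_J -> bool}) :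
  fine (P [set x | S (g x)]) = \sum_(b | S b) fine (P (g @^-1` [set b])).
Proof.
rewrite measure_preimage_pred // (eq_bigr (fun b => (fine (P (g @^-1` [set b])))%:E)).
  by rewrite sumEFin.
by move=> b _; rewrite probability_fineK.
Qed.

Lemma chung_erdos :
  (\sum_(j < J) fine (P (E j))) / (1 + \sum_(j < J) fine (P (E j))) <=
  fine (P (\big[setU/set0]_(j < J) E j)).
Proof.
pose w b := fine (P (g @^-1` [set b])).
have pE (j : 'I_J) : fine (P (E j)) = \sum_(b : {ffun 'I_J -> bool} | b j) w b.
  by rewrite E_gE (fine_prob_pred (fun b => b j)).
have -> : \big[setU/set0]_(j < J) E j = [set x | [exists j, g x j]].
  rewrite -bigcup_mkord; apply/seteqP; split => [x [j /= jJ Ejx] | x /existsP [j]].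
    by apply/existsP; exists (Ordinal jJ); rewrite /g ffunE; exact: mem_set Ejx.
  by rewrite /g ffunE => /set_mem Ejx; exists j => //=; exact: ltn_ord.
rewrite (fine_prob_pred (fun b => [exists j, b j])).
rewrite (eq_bigr (fun j => \sum_(b : {ffun 'I_J -> bool} | b j) w b)) => [|j _]; last exact: pE.
apply: (chung_erdos_fin (w := w) (A := fun j b => b j)) => [b | i j ij].
  exact/fine_ge0/measure_ge0.
have := E_negcorr ij.
rewrite -(probability_fineK P (measurableI _ _ (mE i) (mE j))).
rewrite -(probability_fineK P (mE i)) -(probability_fineK P (mE j)) -EFinM lee_fin.
rewrite !pE !E_gE (_ : _ `&` _ = [set x | g x i && g x j]).
  by rewrite (fine_prob_pred (fun b => b i && b j)).
by apply/seteqP; split => x /=; [case=> -> -> | case/andP].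
Qed.

End chung_erdos.

Lemma measure_bigcup_le d (T : measurableType d) (R : realType)
  (m : {measure set T -> \bar R}) (F : nat -> set T) (c : \bar R) :
  (forall j, measurable (F j)) -> (forall J, (m (\big[setU/set0]_(j < J) F j) <= c)%E) ->
  (m (\bigcup_j F j) <= c)%E.
Proof.
move=> mF le_c; rewrite -bigcup_bigsetU_bigcup.
have mU J : measurable (\big[setU/set0]_(j < J.+1) F j) by exact: bigsetU_measurable.
have U_nd : nondecreasing_seq (fun J => \big[setU/set0]_(j < J.+1) F j).
  by move=> J K JK; rewrite subsetEset; exact: subset_bigsetU.
have cvg_m := @nondecreasing_cvg_mu _ _ _ m _ mU (bigcupT_measurable _ mU) U_nd.
rewrite -(cvg_lim (@ereal_hausdorff R) cvg_m).
by apply: lime_le; [apply/cvg_ex; eexists; exact: cvg_m | apply: nearW => J; exact: le_c].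
Qed.

Lemma count_event_marginal (R : realType) (mu1 mu2 : probability cube R)
  d1 (Omega1 : measurableType d1) (P1 : probability Omega1 R)
  d2 (Omega2 : measurableType d2) (P2 : probability Omega2 R)
  n (X1 : 'I_n -> Omega1 -> cube) (X2 : 'I_n -> Omega2 -> cube) j (U : pred nat) :
  iid_sample P1 mu1 X1 -> iid_sample P2 mu2 X2 ->
  (forall t, mu1 [set x | x j = t] = mu2 [set x | x j = t]) ->
  P1 (count_event X1 j U) = P2 (count_event X2 j U).
Proof.
move=> hX1 hX2 marg.
have mf t : measurable ((fun x : cube => x j) @^-1` [set t]) := measurable_coord j [set t].
pose S (b : {ffun 'I_n -> bool}) := U (\sum_(k < n) b k)%N.
rewrite (iid_event_prob hX1 mf (S := S) (count_event_coordE X1 j U)).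
rewrite (iid_event_prob hX2 mf (S := S) (count_event_coordE X2 j U)).
by congr EFin; apply: eq_bigr => b _; apply: eq_bigr => k _; rewrite /law_weight marg.
Qed.

Definition above (R : numFieldType) n (p r : R) : pred nat :=
  [pred N : nat | r < N%:R / n%:R - p].
Definition below (R : numFieldType) n (p r : R) : pred nat :=
  [pred N : nat | N%:R / n%:R - p < - r].

Lemma upward_closed_above (R : numFieldType) n (p r : R) : upward_closed (above n p r).
Proof.
move=> a b ab /= /lt_le_trans; apply.
by rewrite lerD2r ler_wpM2r ?invr_ge0 // ler_nat.
Qed.

Lemma downward_closed_below (R : numFieldType) n (p r : R) : downward_closed (below n p r).
Proof.
move=> a b ab /=; apply: le_lt_trans.
by rewrite lerD2r ler_wpM2r ?invr_ge0 // ler_nat.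
Qed.

Section max_deviation.
Context (R : realType) d (Omega : measurableType d) (P : probability Omega R)
  (nu : probability cube R) (n : nat) (X : 'I_n -> Omega -> cube).
Hypotheses (hX : iid_sample P nu X) (n_gt0 : (0 < n)%N).

Definition deviation j w : R := `|(sample_count X j w)%:R / n%:R - mean nu j|.

Definition deviation_gt r j : set Omega := [set w | r < deviation j w].

Lemma deviation_gtE r j : deviation_gt r j =
  count_event X j (above n (mean nu j) r) `|` count_event X j (below n (mean nu j) r).
Proof.
apply/seteqP; split => w; rewrite /deviation_gt /deviation /= ltr_normr.
  by case/orP; [left | rewrite ltrNr; right].
by case=> h; apply/orP; [left | right; rewrite ltrNr].
Qed.

Lemma deviation_ge0 j w : 0 <= deviation j w.
Proof. exact: normr_ge0. Qed.

Lemma deviation_le1 j w : deviation j w <= 1.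
Proof.
have count_le : ((sample_count X j w)%:R / n%:R <= 1 :> R).
  rewrite ler_pdivrMr ?ltr0n // mul1r ler_nat /sample_count.
  apply: (@leq_trans (\sum_(k < n) 1)%N); first by apply: leq_sum => k _; exact: leq_b1.
  by rewrite sum_nat_const card_ord muln1.
have := mean_ge0 nu j; have := mean_le1 nu j.
have : 0 <= (sample_count X j w)%:R / n%:R :> R by rewrite divr_ge0.
by rewrite /deviation ler_norml; lra.
Qed.

Lemma max_devE w :
  max_dev nu (fun k => X k w) = ereal_sup (range (fun j => (deviation j w)%:E)).
Proof.
rewrite /max_dev (_ : (fun j => _) = fun j => (deviation j w)%:E) //; apply/funext => j.
by rewrite -meanE -EFinB abse_EFin /deviation /sample_count natr_sum mulrC.
Qed.

Definition max_dev_fun w : R := fine (max_dev nu (fun k => X k w)).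

Lemma max_dev_funE w : (max_dev_fun w)%:E = max_dev nu (fun k => X k w).
Proof.
rewrite /max_dev_fun max_devE fineK // ge0_fin_numE.
  apply: le_lt_trans (ltry 1); apply: ge_ereal_sup => _ [j _ <-].
  by rewrite lee_fin deviation_le1.
by apply: le_trans (ereal_sup_ubound (ex_intro2 _ _ 0%N I erefl)); rewrite lee_fin deviation_ge0.
Qed.

Lemma max_dev_fun_ge0 w : 0 <= max_dev_fun w.
Proof.
rewrite -lee_fin max_dev_funE max_devE.
by apply: le_trans (ereal_sup_ubound (ex_intro2 _ _ 0%N I erefl)); rewrite lee_fin deviation_ge0.
Qed.

Lemma max_dev_fun_gtE r :
  [set w | r < max_dev_fun w] = \bigcup_j deviation_gt r j.
Proof.
apply/seteqP; split => w; rewrite /= -lte_fin max_dev_funE max_devE.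
  by move/ereal_sup_gtP => [_ [j _ <-]]; rewrite lte_fin => ?; exists j.
by move=> [j _ ?]; apply/ereal_sup_gtP; exists (deviation j w)%:E => //; exists j.
Qed.

Lemma measurable_deviation_gt r j : measurable (deviation_gt r j).
Proof. by rewrite deviation_gtE; apply: measurableU; exact: measurable_count_event hX _ _. Qed.

Lemma measurable_max_dev_fun : measurable_fun setT max_dev_fun.
Proof.
apply: (measurability _ (RGenOInfty.measurableE R)) => //.
move=> _ [_ [r ->] <-]; rewrite setTI.
rewrite (_ : _ @^-1` _ = [set w | r < max_dev_fun w]); last first.
  by apply/seteqP; split => w; rewrite /= in_itv /= andbT.
by rewrite max_dev_fun_gtE; apply: bigcupT_measurable => j; exact: measurable_deviation_gt.
Qed.

Definition max_dev_rv : {RV P >-> R} := mfun_Sub (mem_set measurable_max_dev_fun).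

Lemma Delta_ccdf :
  Delta P nu X = (\int[lebesgue_measure]_(r in `[0%R, +oo[) ccdf max_dev_rv r)%E.
Proof.
rewrite -ge0_expectation_ccdf; last exact: max_dev_fun_ge0.
by rewrite expectation_def /Delta; apply: eq_integral => w _; rewrite -max_dev_funE.
Qed.

Lemma ccdf_max_dev r : ccdf max_dev_rv r = P (\bigcup_j deviation_gt r j).
Proof.
rewrite -max_dev_fun_gtE /ccdf /distribution /pushforward; congr (P _).
by apply/seteqP; split => w; rewrite /= in_itv /= andbT.
Qed.

End max_deviation.

Section tail_comparison.
Context (R : realType) (mu mut : probability cube R)
  d1 (Omega1 : measurableType d1) (P1 : probability Omega1 R)
  d2 (Omega2 : measurableType d2) (P2 : probability Omega2 R)
  (n : nat) (X : 'I_n -> Omega1 -> cube) (Y : 'I_n -> Omega2 -> cube).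
Hypotheses (hnc : neg_correlated mu) (hpv : product_version mu mut).
Hypotheses (hX : iid_sample P1 mu X) (hY : iid_sample P2 mut Y).
Variable r : R.

Lemma mean_product_version j : mean mut j = mean mu j.
Proof. by rewrite /mean !coord_meanE (hpv.2 j (fun b => b)). Qed.

Let up j := count_event X j (above n (mean mu j) r).
Let down j := count_event X j (below n (mean mu j) r).
Let tailX := \bigcup_j deviation_gt mu X r j.

Let mtailX : measurable tailX.
Proof. by apply: bigcupT_measurable => j; exact: measurable_deviation_gt hX _ _. Qed.

Let chung_erdos_tail (U : nat -> set Omega1) J :
  (forall j, measurable (U j)) ->
  (forall i j, i != j -> (P1 (U i `&` U j) <= P1 (U i) * P1 (U j))%E) ->
  (forall j, U j `<=` deviation_gt mu X r j) ->
  (\sum_(j < J) fine (P1 (U j))) / (1 + \sum_(j < J) fine (P1 (U j))) <= fine (P1 tailX).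
Proof.
move=> mU U_negcorr U_sub; apply: le_trans (chung_erdos J mU U_negcorr) _.
rewrite -lee_fin !probability_fineK ?inE //; last exact: bigsetU_measurable.
apply: le_measure; rewrite ?inE //; first exact: bigsetU_measurable.
by rewrite -bigcup_mkord => w [j _ /U_sub ?]; exists j.
Qed.

Lemma tail_le_partial J :
  (P2 (\big[setU/set0]_(j < J) deviation_gt mut Y r j) <= 4%:E * P1 tailX)%E.
Proof.
have mup j : measurable (up j) := measurable_count_event hX _ _.
have mdown j : measurable (down j) := measurable_count_event hX _ _.
have negcorr_up i j : i != j -> (P1 (up i `&` up j) <= P1 (up i) * P1 (up j))%E.
  move=> /eqP ij; apply: (count_events_negcorr hX hnc ij).
  by left; split; apply: upward_closed_above.
have negcorr_down i j : i != j -> (P1 (down i `&` down j) <= P1 (down i) * P1 (down j))%E.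
  move=> /eqP ij; apply: (count_events_negcorr hX hnc ij).
  by right; split; apply: downward_closed_below.
have dev_up j : up j `<=` deviation_gt mu X r j by rewrite deviation_gtE => w; left.
have dev_down j : down j `<=` deviation_gt mu X r j by rewrite deviation_gtE => w; right.
have tailY_le : (P2 (\big[setU/set0]_(j < J) deviation_gt mut Y r j) <=
    \sum_(j < J) (P1 (up j) + P1 (down j)))%E.
  apply: le_trans (Boole_inequality P2 _) _ => [j _|].
    exact: measurable_deviation_gt hY _ _.
  apply: lee_sum => j _; rewrite deviation_gtE mean_product_version.
  rewrite -!(count_event_marginal _ hY hX (fun t => hpv.2 j [set t])).
  by apply: measureU2; exact: measurable_count_event hY _ _.
have mtailY : measurable (\big[setU/set0]_(j < J) deviation_gt mut Y r j).
  by apply: bigsetU_measurable => j _; exact: measurable_deviation_gt hY _ _.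
rewrite -(probability_fineK P2 mtailY) -(probability_fineK P1 mtailX) -EFinM lee_fin.
apply: (le4_of_ratio_bounds _ _ _ _ (chung_erdos_tail J mup negcorr_up dev_up)
  (chung_erdos_tail J mdown negcorr_down dev_down)).
- by apply: sumr_ge0 => j _; exact/fine_ge0/measure_ge0.
- by apply: sumr_ge0 => j _; exact/fine_ge0/measure_ge0.
- by rewrite -lee_fin probability_fineK // probability_le1.
rewrite -lee_fin probability_fineK // EFinD -!sumEFin -big_split /=.
rewrite (eq_bigr (fun j : 'I_J => (P1 (up j) + P1 (down j))%E)) // => j _.
by rewrite probability_fineK ?probability_fineK.
Qed.

Lemma tail_le :
  (P2 (\bigcup_j deviation_gt mut Y r j) <= 4%:E * P1 (\bigcup_j deviation_gt mu X r j))%E.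
Proof.
apply: measure_bigcup_le => [j|J]; first exact: measurable_deviation_gt hY _ _.
exact: tail_le_partial.
Qed.

End tail_comparison.

Theorem theorem1 (R : realType) (mu mut : probability cube R)
  (d1 : measure_display) (Omega1 : measurableType d1) (P1 : probability Omega1 R)
  (d2 : measure_display) (Omega2 : measurableType d2) (P2 : probability Omega2 R)
  (n : nat) (X : 'I_n -> Omega1 -> cube) (Y : 'I_n -> Omega2 -> cube) :
  neg_correlated mu ->
  product_version mu mut ->
  (0 < n)%N ->
  iid_sample P1 mu X ->
  iid_sample P2 mut Y ->
  (4^-1%:E * Delta P2 mut Y <= Delta P1 mu X)%E.
Proof.
move=> hnc hpv n_gt0 hX hY.
rewrite (Delta_ccdf hX n_gt0) (Delta_ccdf hY n_gt0).
rewrite -ge0_integralZl_EFin //; last exact: measurable_funTS (ccdf_measurable _).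
apply: ge0_le_integral => //.
- by move=> r _; apply: mule_ge0 => //; rewrite lee_fin invr_ge0.
- by apply: measurable_funeM; exact: measurable_funTS (ccdf_measurable _).
- exact: measurable_funTS (ccdf_measurable _).
move=> r _; rewrite !ccdf_max_dev.
apply: le_trans (lee_wpmul2l _ (tail_le hnc hpv hX hY r)) _.
  by rewrite lee_fin invr_ge0.
by rewrite muleA -EFinM mulVf // mul1e.
Qed.
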